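(* Let $m\ge0$, let $f:\mathbb{R}^n\to\mathbb{R}$ be $m$-weakly convex, $x_k\in\mathbb{R}^n$, $\rho>0$, $\beta\in(0,1)$. Let $\tilde f_j:\mathbb{R}^n\to\mathbb{R}$ be convex with $\tilde f_j(x)\le f(x)+\frac m2\|x-x_k\|^2$ for all $x$; set $z_{j+1}=\arg\min_x\{\tilde f_j(x)+\frac\rho2\|x-x_k\|^2\}$, $\eta_j=\min_x\{\tilde f_j(x)+\frac\rho2\|x-x_k\|^2\}$, $s_{j+1}=\rho(x_k-z_{j+1})$. Let $g_{j+1}\in\mathbb{R}^n$ satisfy $g_{j+1}-m(z_{j+1}-x_k)\in\partial f(z_{j+1})$, and let $\tilde f_{j+1}:\mathbb{R}^n\to\mathbb{R}$ be convex with, for all $x\in\mathbb{R}^n$: (i) $\tilde f_{j+1}(x)\le f(x)+\frac m2\|x-x_k\|^2$; (ii) $\tilde f_{j+1}(x)\ge\tilde f_j(z_{j+1})+\langle s_{j+1},x-z_{j+1}\rangle$; (iii) $\tilde f_{j+1}(x)\ge f(z_{j+1})+\frac m2\|z_{j+1}-x_k\|^2+\langle g_{j+1},x-z_{j+1}\rangle$. Let $\eta_{j+1}=\min_x\{\tilde f_{j+1}(x)+\frac\rho2\|x-x_k\|^2\}$ and $\tilde\epsilon_{j+1}=f(z_{j+1})+\frac m2\|z_{j+1}-x_k\|^2-\tilde f_j(z_{j+1})$. Then $$\eta_{j+1}\ge\eta_j+\frac12\min\Big\{\tilde\epsilon_{j+1},\ \frac{\rho\,\tilde\epsilon_{j+1}^2}{\|g_{j+1}-s_{j+1}\|^2}\Big\}$$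 (with the second term read as $+\infty$ if $g_{j+1}=s_{j+1}$). If moreover $f(x_k)-\big(f(z_{j+1})+\frac m2\|z_{j+1}-x_k\|^2\big)<\beta\big(f(x_k)-\tilde f_j(z_{j+1})\big)$, then, with $\tilde\Delta_j:=f(x_k)-\eta_j$, $$\eta_{j+1}\ge\eta_j+\frac12\min\Big\{(1-\beta)\tilde\Delta_j,\ \frac{(1-\beta)^2\rho\,\tilde\Delta_j^2}{\|g_{j+1}-s_{j+1}\|^2}\Big\}.$$
   Context: A function $f$ is $m$-weakly convex ($m\ge 0$) if $x\mapsto f(x)+\frac{m}{2}\|x\|^2$ is convex. For such $f$, the (Fréchet) subdifferential is $\partial f(x)=\{v\in\mathbb{R}^n: f(y)\ge f(x)+\langle v,y-x\rangle-\frac{m}{2}\|y-x\|^2\ \forall y\}$. *)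

From HB Require Import structures.
From mathcomp Require Import all_boot all_order all_algebra.
From mathcomp Require Import reals.
Set Implicit Arguments. Unset Strict Implicit. Unset Printing Implicit Defensive.
Import Order.TTheory GRing.Theory Num.Theory.
Local Open Scope ring_scope.

Section Defs.
Variables (R : realType) (n : nat).

Definition dotp (u v : 'rV[R]_n) : R := \sum_(i < n) u ord0 i * v ord0 i.
Definition sqnorm (u : 'rV[R]_n) : R := dotp u u.

Definition convexf (f : 'rV[R]_n -> R) : Prop :=
  forall (x y : 'rV[R]_n) (t : R), 0 <= t -> t <= 1 ->
    f (t *: x + (1 - t) *: y) <= t * f x + (1 - t) * f y.

Definition weakly_convex (m : R) (f : 'rV[R]_n -> R) : Prop :=
  convexf (fun x => f x + m / 2 * sqnorm x).

(* v \in \partial f(x) (Frechet subdifferential of an m-weakly convex f) *)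
Definition subdiff (m : R) (f : 'rV[R]_n -> R) (x v : 'rV[R]_n) : Prop :=
  forall y, f y >= f x + dotp v (y - x) - m / 2 * sqnorm (y - x).

Definition is_min_value (phi : 'rV[R]_n -> R) (eta : R) : Prop :=
  (exists w, phi w = eta) /\ (forall x, eta <= phi x).

Definition is_argmin (phi : 'rV[R]_n -> R) (z : 'rV[R]_n) : Prop :=
  forall x, phi z <= phi x.

End Defs.

(* Every convex combination, with weight lam in [0, 1], of the two cutting
   planes below ftj1 is an affine minorant with value ftj z + lam eps at z and
   slope s + lam (g - s).  As s = rho (xk - z), the proximal term cancels the
   slope s, so the minorant plus the proximal term is bounded below by
   etaj + lam eps - lam^2 ||g - s||^2 / (2 rho).  The choice lam = M / eps with
   M = min(eps, rho eps^2 / ||g - s||^2) yields the gain M / 2; under the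
   descent test the same works with eps replaced by the smaller (1 - beta) Delta. *)
From HB Require Import structures.
From mathcomp Require Import all_boot all_order all_algebra.
From mathcomp Require Import reals ring lra.
Set Implicit Arguments. Unset Strict Implicit. Unset Printing Implicit Defensive.
Import Order.TTheory GRing.Theory Num.Theory.
Local Open Scope ring_scope.

Section Euclid.
Variables (R : realType) (n : nat).
Implicit Types (u v w : 'rV[R]_n) (c : R).

Lemma dotpC u v : dotp u v = dotp v u.
Proof. by apply: eq_bigr => i _; rewrite mulrC. Qed.

Lemma dotpDl u w v : dotp (u + w) v = dotp u v + dotp w v.
Proof. by rewrite /dotp -big_split; apply: eq_bigr => i _; rewrite mxE mulrDl. Qed.

Lemma dotpZl c u v : dotp (c *: u) v = c * dotp u v.
Proof. by rewrite /dotp mulr_sumr; apply: eq_bigr => i _; rewrite mxE mulrA. Qed.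

Lemma dotpNl u v : dotp (- u) v = - dotp u v.
Proof. by rewrite -scaleN1r dotpZl mulN1r. Qed.

Lemma dotpBl u w v : dotp (u - w) v = dotp u v - dotp w v.
Proof. by rewrite dotpDl dotpNl. Qed.

Lemma sqnorm_ge0 u : 0 <= sqnorm u.
Proof. by apply: sumr_ge0 => i _; rewrite -expr2 sqr_ge0. Qed.

Lemma sqnorm0 : sqnorm (0 : 'rV[R]_n) = 0.
Proof. by apply: big1 => i _; rewrite mxE mul0r. Qed.

Lemma sqnormD u v : sqnorm (u + v) = sqnorm u + 2 * dotp u v + sqnorm v.
Proof.
rewrite /sqnorm !dotpDl (dotpC u (u + v)) (dotpC v (u + v)) !dotpDl (dotpC v u).
by rewrite mulr2n; ring.
Qed.

Lemma sqnormZ c u : sqnorm (c *: u) = c ^+ 2 * sqnorm u.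
Proof. by rewrite /sqnorm dotpZl (dotpC u) dotpZl mulrA expr2. Qed.

Lemma dotp_sqnorm_ge (rho c : R) v w : 0 < rho ->
  - (c ^+ 2 * sqnorm v) / (2 * rho) <= c * dotp v w + rho / 2 * sqnorm w.
Proof.
move=> rho_gt0; have := sqnorm_ge0 (rho *: w + c *: v).
rewrite sqnormD !sqnormZ dotpZl dotpC dotpZl => sq_ge0.
rewrite ler_pdivrMr ?mulr_gt0 //.
have -> : (c * dotp v w + rho / 2 * sqnorm w) * (2 * rho)
        = c * rho * dotp v w * 2 + rho ^+ 2 * sqnorm w by field.
lra.
Qed.

End Euclid.

Lemma quadratic_gain_ge (R : realType) (rho e M V : R) :
  0 < rho -> 0 <= V -> 0 <= M -> M <= e -> M * V <= rho * e ^+ 2 ->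
  exists2 lam, 0 <= lam <= 1 & M / 2 <= lam * e - lam ^+ 2 * V / (2 * rho).
Proof.
move=> rho_gt0 V_ge0 M_ge0 M_le_e MV_le.
have [e_gt0 | e_le0] := ltP 0 e; last first.
  have M0 : M = 0 by apply/le_anti; rewrite M_ge0 (le_trans M_le_e e_le0).
  by exists 0; rewrite ?lexx ?ler01 // M0 !mul0r expr0n /= !mul0r subrr.
exists (M / e).
  by rewrite divr_ge0 ?(ltW e_gt0) //= ler_pdivrMr // mul1r.
have lam_e : M / e * e = M by rewrite divfK ?gt_eqF.
have lam2V : (M / e) ^+ 2 * V <= rho * M.
  rewrite expr_div_n mulrAC ler_pdivrMr ?exprn_gt0 //.
  by rewrite expr2 -mulrA -mulrA (mulrCA rho) ler_wpM2l.
rewrite lam_e; suff : (M / e) ^+ 2 * V / (2 * rho) <= M / 2 by lra.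
rewrite ler_pdivrMr ?mulr_gt0 //.
by have -> : M / 2 * (2 * rho) = rho * M by field.
Qed.

Lemma min_div_mul_le (R : realType) (a b V : R) :
  0 <= b -> 0 <= V -> Num.min a (b / V) * V <= b.
Proof.
move=> b_ge0 V_ge0; have [-> | V_neq0] := eqVneq V 0; first by rewrite mulr0.
rewrite -ler_pdivlMr ?lt_def ?V_neq0 //.
by rewrite ge_min lexx orbT.
Qed.

Section ProximalCuttingPlanes.
Variables (R : realType) (n : nat) (rho : R) (xk z g : 'rV[R]_n) (a F : R).
Variable h : 'rV[R]_n -> R.
Hypothesis rho_gt0 : 0 < rho.
Let s := rho *: (xk - z).
Hypothesis h_ge_aggregate : forall x, a + dotp s (x - z) <= h x.
Hypothesis h_ge_cut : forall x, F + dotp g (x - z) <= h x.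
Variable eta : R.
Hypothesis eta_min : is_min_value (fun x => h x + rho / 2 * sqnorm (x - xk)) eta.

Lemma prox_cutting_planes_ge (lam : R) x : 0 <= lam <= 1 ->
  a + rho / 2 * sqnorm (z - xk) + lam * (F - a)
    - lam ^+ 2 * sqnorm (g - s) / (2 * rho)
  <= h x + rho / 2 * sqnorm (x - xk).
Proof.
case/andP=> lam_ge0 lam_le1.
have convex_cut : a + lam * (F - a) + dotp s (x - z) + lam * dotp (g - s) (x - z)
                  <= h x.
  have := h_ge_aggregate x; have := h_ge_cut x; rewrite dotpBl; nra.
have x_xk : x - xk = (x - z) + (z - xk) by rewrite addrA subrK.
have s_dotp : dotp s (x - z) = - rho * dotp (x - z) (z - xk).
  by rewrite /s dotpZl -opprB dotpNl dotpC mulrN mulNr.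
rewrite x_xk (sqnormD (x - z)); move: convex_cut; rewrite s_dotp.
have := @dotp_sqnorm_ge _ _ rho lam (g - s) (x - z) rho_gt0; lra.
Qed.

Lemma prox_min_value_gain (E : R) : 0 <= E <= F - a ->
  a + rho / 2 * sqnorm (z - xk)
    + 2^-1 * (if g == s then E else Num.min E (rho * E ^+ 2 / sqnorm (g - s)))
  <= eta.
Proof.
case/andP=> E_ge0 E_le.
set M := if g == s then E else _.
have rE2_ge0 : 0 <= rho * E ^+ 2 := mulr_ge0 (ltW rho_gt0) (sqr_ge0 E).
have [M_ge0 M_le_E MV_le] : [/\ 0 <= M, M <= E & M * sqnorm (g - s) <= rho * E ^+ 2].
  rewrite /M; case: eqP => [-> | _]; first by rewrite subrr sqnorm0 mulr0.
  split; [by rewrite le_min E_ge0 divr_ge0 ?sqnorm_ge0 | by rewrite ge_min lexx |].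
  exact: min_div_mul_le (sqnorm_ge0 _).
have MV_le' : M * sqnorm (g - s) <= rho * (F - a) ^+ 2.
  apply: (le_trans MV_le); rewrite ler_wpM2l ?(ltW rho_gt0) //.
  by rewrite ler_pXn2r ?nnegrE // (le_trans E_ge0 E_le).
have [lam lam01 gain] :=
  quadratic_gain_ge rho_gt0 (sqnorm_ge0 _) M_ge0 (le_trans M_le_E E_le) MV_le'.
case: eta_min => [[w <-] _].
have := prox_cutting_planes_ge w lam01; lra.
Qed.

End ProximalCuttingPlanes.

Theorem mainTheorem7 (R : realType) (n : nat) (m : R) (f : 'rV[R]_n -> R)
  (xk : 'rV[R]_n) (rho beta : R) (ftj ftj1 : 'rV[R]_n -> R)
  (z g : 'rV[R]_n) (eta1 : R) :
  0 <= m -> weakly_convex m f -> 0 < rho -> 0 < beta -> beta < 1 ->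
  convexf ftj ->
  (forall x, ftj x <= f x + m / 2 * sqnorm (x - xk)) ->
  (* z = z_{j+1} = argmin { ftj x + rho/2 ||x - xk||^2 } *)
  is_argmin (fun x => ftj x + rho / 2 * sqnorm (x - xk)) z ->
  let etaj := ftj z + rho / 2 * sqnorm (z - xk) in
  let s := rho *: (xk - z) in
  subdiff m f z (g - m *: (z - xk)) ->
  convexf ftj1 ->
  (forall x, ftj1 x <= f x + m / 2 * sqnorm (x - xk)) ->
  (forall x, ftj1 x >= ftj z + dotp s (x - z)) ->
  (forall x, ftj1 x >= f z + m / 2 * sqnorm (z - xk) + dotp g (x - z)) ->
  is_min_value (fun x => ftj1 x + rho / 2 * sqnorm (x - xk)) eta1 ->
  let eps := f z + m / 2 * sqnorm (z - xk) - ftj z in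
  (eta1 >= etaj + 2^-1 *
     (if g == s then eps else Num.min eps (rho * eps ^+ 2 / sqnorm (g - s))))
  /\
  (f xk - (f z + m / 2 * sqnorm (z - xk)) < beta * (f xk - ftj z) ->
   let Delta := f xk - etaj in
   eta1 >= etaj + 2^-1 *
     (if g == s then (1 - beta) * Delta
      else Num.min ((1 - beta) * Delta)
                   ((1 - beta) ^+ 2 * rho * Delta ^+ 2 / sqnorm (g - s)))).
Proof.
move=> _ _ rho_gt0 _ beta_lt1 _ ftj_le z_min etaj s _ _ _ ftj1_ge_agg
  ftj1_ge_cut eta1_min eps.
have eps_ge0 : 0 <= eps by rewrite subr_ge0 ftj_le.
have gain := prox_min_value_gain rho_gt0 ftj1_ge_agg ftj1_ge_cut eta1_min.
split; first by apply: gain; rewrite eps_ge0 /=.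
move=> serious_step /=; set Delta := f xk - etaj.
have etaj_le_fxk : etaj <= f xk.
  have := ftj_le xk; have := z_min xk.
  rewrite subrr sqnorm0 !mulr0 !addr0; exact: le_trans.
have ftjz_le_etaj : ftj z <= etaj.
  by rewrite lerDl mulr_ge0 ?sqnorm_ge0 // divr_ge0 ?(ltW rho_gt0).
have -> : (1 - beta) ^+ 2 * rho * Delta ^+ 2 = rho * ((1 - beta) * Delta) ^+ 2.
  by ring.
apply: gain; apply/andP; split.
  by rewrite mulr_ge0 ?subr_ge0 ?(ltW beta_lt1).
rewrite /eps /Delta; nra.
Qed.
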